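(* Let $\mathcal G=(V_{\min},V_{\max},E,w,\lambda)$ be a discounted payoff game, let $\sigma$ be a joint strategy, and let $\nu$ be an optimal solution for $f_\sigma$, i.e. a basis valuation of $H$ that minimises $f_\sigma$ over all solutions of $H$. Then: (1) if $\sigma$ is co-optimal, then $f_\sigma(\nu)=0$; (2) if $\nu$ defines strategies for both players and these strategies are the ones given by $\sigma$ (i.e. for every $v\in V$ the inequation $I_{(v,\sigma(v))}$ holds with equality at $\nu$), then $\sigma$ is co-optimal and $\nu=\mathrm{val}(\mathcal G)$.
   Context: A discounted payoff game (DPG) is a tuple $\mathcal G=(V_{\min},V_{\max},E,w,\lambda)$ where $V=V_{\min}\cup V_{\max}$ is a finite set of vertices partitioned into disjoint sets $V_{\min}$ (controlled by player Min) and $V_{\max}$ (controlled by player Max), $E\subseteq V\times V$ is such that every vertex has at least one outgoing edge, $w:E\to\mathbb R$ is a weight function and $\lambda:E\to[0,1)$ a discount function (write $w_e,\lambda_e$). The outcome of an infinite play $e_0e_1e_2\ldots$ (with $e_i=(v_i,v_{i+1})\in E$) is $\sum_{i\ge0}w_{e_i}\prod_{j<i}\lambda_{e_j}$. A joint strategy is a map $\sigma:V\to V$ with $(v,\sigma(v))\in E$ for all $v$; its restrictions to $V_{\min}$ and $V_{\max}$ are positional strategies of Min and Max. $\mathrm{val}(\sigma)(v)$ is the outcome of the unique play from $v$ following $\sigma$. The value of the game is $\mathrm{val}(\mathcal G)(v)=\sup_{\sigma_{\max}}\inf_{\sigma_{\min}}$ of the outcome of the play from $v$ (over positional strategies; these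 games are positionally determined). A joint strategy $\sigma$ is co-optimal iff $\mathrm{val}(\sigma)=\mathrm{val}(\mathcal G)$. $H$ is the system of inequations over unknowns $x\in\mathbb R^V$ containing, for each edge $e=(v,v')$, the inequation $I_e$: $x(v)\ge w_e+\lambda_e x(v')$ if $v\in V_{\max}$ and $x(v)\le w_e+\lambda_e x(v')$ if $v\in V_{\min}$. For a valuation $x$ and edge $(v,v')$, $\mathsf{offset}(x,(v,v'))=x(v)-(w_{(v,v')}+\lambda_{(v,v')}x(v'))$ if $v\in V_{\max}$ and $(w_{(v,v')}+\lambda_{(v,v')}x(v'))-x(v)$ otherwise. For a joint strategy $\sigma$, $f_\sigma(x)=\sum_{v\in V}\mathsf{offset}(x,(v,\sigma(v)))$. A basis of $H$ is a set of $|V|$ inequations of $H$ whose equality versions have a unique common solution; if that solution satisfies all of $H$ it is called the (basis) valuation of that basis. A valuation $x$ defines strategies for both players if every vertex $v$ has an outgoing edge $e$ such that $I_e$ holds with equality at $x$. *)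

From HB Require Import structures.
From mathcomp Require Import all_boot all_order all_algebra.
From mathcomp Require Import all_classical all_reals all_analysis.
Set Implicit Arguments. Unset Strict Implicit. Unset Printing Implicit Defensive.
Import Order.TTheory GRing.Theory Num.Theory.
Local Open Scope classical_set_scope.
Local Open Scope ring_scope.

(* A discounted payoff game on the finite vertex type V.
   isMax v = true  <-> v \in V_max ;  isMax v = false <-> v \in V_min.
   edge v v' <-> (v,v') \in E.  w, lam are the weight and discount
   functions (only their values on edges matter). *)
Record DPG (R : realType) (V : finType) := {
  isMax : pred V;
  edge : rel V;
  w : V -> V -> R;
  lam : V -> V -> R;
  edge_total : forall v, exists v', edge v v';
  lam_ge0 : forall v v', edge v v' -> 0 <= lam v v';
  lam_lt1 : forall v v', edge v v' -> lam v v' < 1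
}.

Section DPGdefs.
Context {R : realType} {V : finType} (G : DPG R V).

Definition is_joint_strategy (sigma : V -> V) : Prop :=
  forall v, edge G v (sigma v).

Definition play (sigma : V -> V) (v : V) (i : nat) : V := iter i sigma v.

Definition val_strat (sigma : V -> V) (v : V) : R :=
  limn (fun n : nat => \sum_(i < n)
     (w G (play sigma v i) (play sigma v i.+1) *
      \prod_(j < i) lam G (play sigma v j) (play sigma v j.+1))).

Definition combine (s1 s2 : V -> V) : V -> V :=
  fun v => if isMax G v then s1 v else s2 v.

(* value of the game: sup over positional Max strategies of inf over positional
   Min strategies (positional strategies of a player = restrictions of joint
   strategies to that player's vertices). *)
Definition val_game (v : V) : R :=
  sup [set r | exists s1, is_joint_strategy s1 /\
     r = inf [set r' | exists s2, is_joint_strategy s2 /\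
                 r' = val_strat (combine s1 s2) v]].

Definition co_optimal (sigma : V -> V) : Prop :=
  forall v, val_strat sigma v = val_game v.

Definition ineq_holds (x : V -> R) (v v' : V) : Prop :=
  if isMax G v then w G v v' + lam G v v' * x v' <= x v
  else x v <= w G v v' + lam G v v' * x v'.

Definition ineq_tight (x : V -> R) (v v' : V) : Prop :=
  x v = w G v v' + lam G v v' * x v'.

Definition solves_H (x : V -> R) : Prop :=
  forall v v', edge G v v' -> ineq_holds x v v'.

Definition offset (x : V -> R) (v v' : V) : R :=
  if isMax G v then x v - (w G v v' + lam G v v' * x v')
  else (w G v v' + lam G v v' * x v') - x v.

Definition f_sigma (sigma : V -> V) (x : V -> R) : R :=
  \sum_(v : V) offset x v (sigma v).

(* B (a set of edges = a set of inequations of H) is a basis whose equality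
   versions have x as their unique common solution *)
Definition basis_with_solution (B : {set V * V}) (x : V -> R) : Prop :=
  [/\ forall e, e \in B -> edge G e.1 e.2,
      #|B| = #|V|,
      forall e, e \in B -> ineq_tight x e.1 e.2 &
      forall y : V -> R, (forall e, e \in B -> ineq_tight y e.1 e.2) -> y = x].

Definition basis_valuation (x : V -> R) : Prop :=
  (exists B, basis_with_solution B x) /\ solves_H x.

Definition optimal_for (sigma : V -> V) (x : V -> R) : Prop :=
  basis_valuation x /\ forall y, solves_H y -> f_sigma sigma x <= f_sigma sigma y.

End DPGdefs.

From HB Require Import structures.
From mathcomp Require Import all_boot all_order all_algebra.
From mathcomp Require Import all_classical all_reals all_analysis.
From mathcomp Require Import ring lra.
Import Order.TTheory GRing.Theory Num.Theory.
Import numFieldNormedType.Exports.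
Local Open Scope classical_set_scope.
Local Open Scope ring_scope.

(* Unrolling the inequations of H along the play of a joint strategy tau from v
   gives the identity
     (first n discounted payoffs) + (discount of n steps) * x(v_n)
       = x(v) + sum_(i<n) (discount of i steps) * (residual of x at step i),
   and the discount of n steps is at most (max lam)^n; so whenever the
   residuals of x along tau have constant sign, x bounds val(tau) on that side.
   If x solves H and is tight along tau, x thus bounds from above every play in
   which Min follows tau and from below every play in which Max follows tau, so
   x = val(G) and tau is co-optimal: this gives (2).  Such an x exists: the
   fixed point of the Bellman operator, a (max lam)-contraction.  If sigma is
   co-optimal, val(sigma) = val(G) = x makes x tight along sigma, so
   f_sigma(x) = 0; as f_sigma is nonnegative on the solutions of H, its
   minimum f_sigma(nu) is 0, which is (1). *)

Lemma discounted_sum_telescope {R : comRingType} (a l x : nat -> R) n :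
  \sum_(i < n) a i * \prod_(j < i) l j + x n * \prod_(j < n) l j =
  x 0%N + \sum_(i < n) (a i + l i * x i.+1 - x i) * \prod_(j < i) l j.
Proof.
elim: n => [|n IHn]; first by rewrite !big_ord0 mulr1 addr0 add0r.
by rewrite !big_ord_recr /= addrA -IHn; ring.
Qed.

Lemma mx_entry_le_norm {K : realDomainType} {m n} (x : 'M[K]_(m, n)) i j :
  `|x i j| <= `|x|.
Proof. by rewrite [`|x|]mx_normrE (bigD1 (i, j)) //= le_max lexx. Qed.

Lemma mx_norm_le {K : realDomainType} {m n} (x : 'M[K]_(m, n)) (c : K) :
  0 <= c -> (forall i j, `|x i j| <= c) -> `|x| <= c.
Proof.
move=> c_ge0 x_le; rewrite [`|x|]mx_normrE.
by elim/big_ind: _ => // a b a_le b_le; rewrite ge_max a_le.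
Qed.

(* The completeness and the normed-module structure of real matrices are
   declared separately in the library; Banach's theorem needs their join. *)
HB.instance Definition _ (R : realType) (m n : nat) := Complete.on 'M[R]_(m, n).

Section Discount.
Context {R : realType} {V : finType} (G : DPG R V).

Definition lam_max : R :=
  \big[Num.max/0]_(e : V * V | edge G e.1 e.2) lam G e.1 e.2.

Lemma lam_max_lt1 : lam_max < 1.
Proof.
rewrite /lam_max; elim/big_ind: _ => //= [a b a_lt1 b_lt1|[v v'] /lam_lt1 //].
by rewrite gt_max a_lt1.
Qed.

Lemma lam_max_ge0 : 0 <= lam_max.
Proof.
rewrite /lam_max; elim/big_ind: _ => //= [a b a_ge0 _|[v v'] /lam_ge0 //].
by rewrite le_max a_ge0.
Qed.

Lemma lam_le_max {v v'} : edge G v v' -> 0 <= lam G v v' <= lam_max.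
Proof.
by move=> e; rewrite lam_ge0 //= /lam_max (bigD1 (v, v')) //= le_max lexx.
Qed.

Lemma norm_lam_max_lt1 : `|lam_max| < 1.
Proof. by rewrite ger0_norm ?lam_max_ge0 ?lam_max_lt1. Qed.

Definition w_bound : R := \sum_(e : V * V) `|w G e.1 e.2|.

Lemma w_le_bound v v' : `|w G v v'| <= w_bound.
Proof. by rewrite /w_bound (bigD1 (v, v')) //= lerDl sumr_ge0. Qed.

Lemma w_bound_ge0 : 0 <= w_bound.
Proof. exact: sumr_ge0. Qed.

Variables (tau : V -> V) (v : V).
Hypothesis tau_joint : is_joint_strategy G tau.

Lemma play_edge i : edge G (play tau v i) (play tau v i.+1).
Proof. by rewrite /play iterS; apply: tau_joint. Qed.

Definition discount (n : nat) : R :=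
  \prod_(j < n) lam G (play tau v j) (play tau v j.+1).

Definition partial_outcome (n : nat) : R :=
  \sum_(i < n) w G (play tau v i) (play tau v i.+1) * discount i.

Lemma val_strat_partial : val_strat G tau v = limn partial_outcome.
Proof. by []. Qed.

Lemma discount_ge0 n : 0 <= discount n.
Proof. by apply: prodr_ge0 => j _; case/andP: (lam_le_max (play_edge j)). Qed.

Lemma discount_le n : discount n <= lam_max ^+ n.
Proof.
rewrite -[in leRHS](card_ord n) -prodr_const.
by apply: ler_prod => j _; apply: lam_le_max; apply: play_edge.
Qed.

Lemma norm_discount_le (c : R) (x : nat -> R) : (forall n, `|x n| <= c) ->
  forall n, `|x n * discount n| <= geometric c lam_max n.
Proof.
move=> x_le n; rewrite normrM [`|discount n|]ger0_norm ?discount_ge0 //.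
by apply: ler_pM => //; [exact: discount_ge0 | exact: discount_le].
Qed.

Lemma cvg_partial_outcome : cvgn partial_outcome.
Proof.
pose u i := w G (play tau v i) (play tau v i.+1) * discount i.
have -> : partial_outcome = series u.
  by apply: funext => n; rewrite /series /= big_mkord.
apply: normed_cvg; apply: (series_le_cvg (v_ := geometric w_bound lam_max)).
- by move=> n; exact: normr_ge0.
- by move=> n; rewrite /geometric /= mulr_ge0 ?exprn_ge0 ?lam_max_ge0 ?w_bound_ge0.
- apply: (norm_discount_le w_bound (fun i => w G (play tau v i) (play tau v i.+1))) => i.
  exact: w_le_bound.
- exact: is_cvg_geometric_series norm_lam_max_lt1.
Qed.

Lemma cvg_discount_tail (x : V -> R) :
  (fun n => x (play tau v n) * discount n) @ \oo --> 0.
Proof.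
pose g := geometric (\sum_u `|x u|) lam_max.
have g_cvg0 : g @ \oo --> 0 := cvg_geometric _ norm_lam_max_lt1.
apply: (@squeeze_cvgr _ _ _ _ (fun n => - g n) g); last exact: g_cvg0.
- apply: nearW => n; rewrite -ler_norml.
  apply: (norm_discount_le _ (fun i => x (play tau v i))) => i.
  by rewrite (bigD1 (play tau v i)) //= lerDl sumr_ge0.
- by rewrite -oppr0; apply: cvgN.
Qed.

Lemma partial_outcome_telescope (x : V -> R) n :
  partial_outcome n + x (play tau v n) * discount n =
  x v + \sum_(i < n) (w G (play tau v i) (play tau v i.+1) +
     lam G (play tau v i) (play tau v i.+1) * x (play tau v i.+1) -
     x (play tau v i)) * discount i.
Proof.
exact: (discounted_sum_telescope (fun i => w G (play tau v i) (play tau v i.+1))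
  (fun i => lam G (play tau v i) (play tau v i.+1)) (fun i => x (play tau v i))).
Qed.

Lemma cvg_val_strat_tail (x : V -> R) :
  (fun n => partial_outcome n + x (play tau v n) * discount n) @ \oo -->
  val_strat G tau v.
Proof.
rewrite -[val_strat G tau v]addr0; apply: cvgD; first exact: cvg_partial_outcome.
exact: cvg_discount_tail.
Qed.

Lemma val_strat_ge (x : V -> R) :
  (forall u, x u <= w G u (tau u) + lam G u (tau u) * x (tau u)) ->
  x v <= val_strat G tau v.
Proof.
move=> x_le; rewrite -(cvg_lim _ (cvg_val_strat_tail x)) //.
apply: limr_ge; first exact: cvgP (cvg_val_strat_tail x).
apply: nearW => n; rewrite partial_outcome_telescope lerDl.
by apply: sumr_ge0 => i _; rewrite mulr_ge0 ?discount_ge0 // subr_ge0 x_le.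
Qed.

Lemma val_strat_le (x : V -> R) :
  (forall u, w G u (tau u) + lam G u (tau u) * x (tau u) <= x u) ->
  val_strat G tau v <= x v.
Proof.
move=> x_ge; rewrite -(cvg_lim _ (cvg_val_strat_tail x)) //.
apply: limr_le; first exact: cvgP (cvg_val_strat_tail x).
apply: nearW => n; rewrite partial_outcome_telescope gerDl.
by apply: sumr_le0 => i _; rewrite mulr_le0_ge0 ?discount_ge0 // subr_le0 x_ge.
Qed.

End Discount.

Section Outcomes.
Context {R : realType} {V : finType} (G : DPG R V).

Lemma partial_outcomeS tau v n :
  partial_outcome G tau v n.+1 =
  w G v (tau v) + lam G v (tau v) * partial_outcome G tau (tau v) n.
Proof.
rewrite /partial_outcome big_ord_recl /discount big_ord0 mulr1 big_distrr /=.
congr (_ + _); apply: eq_bigr => i _; rewrite big_ord_recl /play /= -!iterSr mulrCA.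
by congr (_ * (_ * _)); apply: eq_bigr => j _; rewrite -iterSr.
Qed.

Lemma val_strat_unfold tau v : is_joint_strategy G tau ->
  val_strat G tau v = w G v (tau v) + lam G v (tau v) * val_strat G tau (tau v).
Proof.
move=> tau_joint; rewrite !val_strat_partial; apply: cvg_lim => //.
rewrite -cvg_shiftS; under eq_fun => n do rewrite /= partial_outcomeS.
by apply: cvgD; [exact: cvg_cst | apply: cvgMr; exact: cvg_partial_outcome].
Qed.

Lemma val_strat_tight {tau} {x : V -> R} : is_joint_strategy G tau ->
  (forall u, ineq_tight G x u (tau u)) -> forall v, val_strat G tau v = x v.
Proof.
move=> tau_joint x_tight v; apply/eqP; rewrite eq_le.
by rewrite val_strat_le ?val_strat_ge // => u; rewrite -x_tight.
Qed.

Definition outcome_bound : R := w_bound G / (1 - lam_max G).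

Lemma val_strat_ge_bound tau v : is_joint_strategy G tau ->
  - outcome_bound <= val_strat G tau v.
Proof.
move=> tau_joint; apply: (val_strat_ge G tau v tau_joint (fun=> - outcome_bound)) => u.
have q_lt1 := lam_max_lt1 G.
have K_ge0 : 0 <= outcome_bound.
  by rewrite divr_ge0 ?w_bound_ge0 // subr_ge0 ltW.
have K_eq : outcome_bound * (1 - lam_max G) = w_bound G.
  by rewrite mulfVK // subr_eq0 eq_sym lt_eqF.
have [_ lam_le] := andP (lam_le_max G (tau_joint u)).
have := ler_wpM2l K_ge0 lam_le; have := w_le_bound G u (tau u).
rewrite ler_norml => /andP[w_ge _]; lra.
Qed.

End Outcomes.

Section GameValue.
Context {R : realType} {V : finType} (G : DPG R V).

Definition max_guarantee (s1 : V -> V) (v : V) : R :=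
  inf [set r | exists s2, is_joint_strategy G s2 /\
                 r = val_strat G (combine G s1 s2) v].

Lemma val_gameE v : val_game G v =
  sup [set r | exists s1, is_joint_strategy G s1 /\ r = max_guarantee s1 v].
Proof. by []. Qed.

Lemma combine_joint s1 s2 : is_joint_strategy G s1 -> is_joint_strategy G s2 ->
  is_joint_strategy G (combine G s1 s2).
Proof. by move=> s1_joint s2_joint u; rewrite /combine; case: ifP. Qed.

Lemma max_guarantee_le v {s1 s2} :
  is_joint_strategy G s1 -> is_joint_strategy G s2 ->
  max_guarantee s1 v <= val_strat G (combine G s1 s2) v.
Proof.
move=> s1_joint s2_joint; apply: ge_inf; last by exists s2.
exists (- outcome_bound G) => _ [s [s_joint ->]].
exact/val_strat_ge_bound/combine_joint.
Qed.

Context {tau : V -> V} {x : V -> R}.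
Hypotheses (tau_joint : is_joint_strategy G tau) (x_sol : solves_H G x)
  (x_tight : forall u, ineq_tight G x u (tau u)).

Lemma max_guarantee_le_solution s1 v : is_joint_strategy G s1 ->
  max_guarantee s1 v <= x v.
Proof.
move=> s1_joint; apply: le_trans (max_guarantee_le v s1_joint tau_joint) _.
apply: val_strat_le => [|u]; first exact: combine_joint.
rewrite /combine; case: ifP => u_max; last by rewrite -x_tight.
by have := x_sol _ _ (s1_joint u); rewrite /ineq_holds u_max.
Qed.

Lemma max_guarantee_tight v : max_guarantee tau v = x v.
Proof.
apply/eqP; rewrite eq_le max_guarantee_le_solution //=.
apply: lb_le_inf => [|_ [s2 [s2_joint ->]]].
  by exists (val_strat G (combine G tau tau) v), tau.
apply: val_strat_ge => [|u]; first exact: combine_joint.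
rewrite /combine; case: ifP => u_max; first by rewrite -x_tight.
by have := x_sol _ _ (s2_joint u); rewrite /ineq_holds u_max.
Qed.

Lemma val_game_tight_solution : val_game G = x.
Proof.
apply: funext => v; rewrite val_gameE; apply/eqP; rewrite eq_le; apply/andP; split.
- apply: ge_sup; first by exists (x v), tau; rewrite max_guarantee_tight.
  by move=> _ [s1 [s1_joint ->]]; exact: max_guarantee_le_solution.
- apply: ub_le_sup; last by exists tau; rewrite max_guarantee_tight.
  by exists (x v) => _ [s1 [s1_joint ->]]; exact: max_guarantee_le_solution.
Qed.

End GameValue.

Section Bellman.
Context {R : realType} {V : finType} (G : DPG R V).

Definition edge_value (y : V -> R) (v v' : V) : R := w G v v' + lam G v v' * y v'.

Definition best_succ (y : V -> R) (v : V) : V :=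
  let v0 := xchoose (edge_total G v) in
  if isMax G v then [arg max_(v' > v0 | edge G v v') edge_value y v v']%O
  else [arg min_(v' < v0 | edge G v v') edge_value y v v']%O.

Lemma best_succP (y : V -> R) v : edge G v (best_succ y v) /\
  forall v', edge G v v' ->
    if isMax G v then edge_value y v v' <= edge_value y v (best_succ y v)
    else edge_value y v (best_succ y v) <= edge_value y v v'.
Proof.
rewrite /best_succ; have v0_edge := xchooseP (edge_total G v).
case: ifP => _; first by case: arg_maxP => // v1 e1 v1_max; split=> // v' /v1_max.
by case: arg_minP => // v1 e1 v1_min; split=> // v' /v1_min.
Qed.

Definition bellman (y : V -> R) (v : V) : R := edge_value y v (best_succ y v).

Lemma bellman_lipschitz (y1 y2 : V -> R) (D : R) v :
  (forall u, `|y1 u - y2 u| <= D) ->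
  `|bellman y1 v - bellman y2 v| <= lam_max G * D.
Proof.
move=> y_le.
have diff_le v' : edge G v v' ->
    `|edge_value y1 v v' - edge_value y2 v v'| <= lam_max G * D.
  move=> e; have /andP[lam_ge0 lam_le] := lam_le_max G e.
  have -> : edge_value y1 v v' - edge_value y2 v v' = lam G v v' * (y1 v' - y2 v').
    by rewrite /edge_value; ring.
  rewrite normrM ger0_norm //.
  by apply: ler_pM => //; exact: (le_trans (normr_ge0 _) (y_le v')).
have [e1 best1] := best_succP y1 v; have [e2 best2] := best_succP y2 v.
have := best1 _ e2; have := best2 _ e1.
move: (diff_le _ e1) (diff_le _ e2).
rewrite /bellman !ler_norml => /andP[d1_ge d1_le] /andP[d2_ge d2_le].
by case: (isMax G v) => best2_e1 best1_e2; apply/andP; split; lra.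
Qed.

Definition vec_of_fun (y : V -> R) : 'rV[R]_#|V| := \row_i y (enum_val i).

Definition fun_of_vec (x : 'rV[R]_#|V|) : V -> R := fun v => x ord0 (enum_rank v).

Lemma vec_of_funK : cancel vec_of_fun fun_of_vec.
Proof. by move=> y; apply: funext => v; rewrite /fun_of_vec mxE enum_rankK. Qed.

Definition bellman_mx (x : 'rV[R]_#|V|) : 'rV[R]_#|V| :=
  vec_of_fun (bellman (fun_of_vec x)).

End Bellman.

HB.instance Definition _ (R : realType) (V : finType) (G : DPG R V) :=
  isFun.Build _ _ setT setT (bellman_mx G) (fun _ _ => I).

Section BellmanFixpoint.
Context {R : realType} {V : finType} (G : DPG R V).

Lemma bellman_mx_contraction :
  is_contraction (bellman_mx G : {fun [set: 'rV[R]_#|V|] >-> [set: 'rV[R]_#|V|]}).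
Proof.
exists (NngNum (lam_max_ge0 G)); split=> [|[x1 x2] _ /=]; first exact: lam_max_lt1.
apply: mx_norm_le => [|i j]; first by rewrite mulr_ge0 ?lam_max_ge0.
rewrite !mxE; apply: bellman_lipschitz => u.
have -> : fun_of_vec x1 u - fun_of_vec x2 u = (x1 - x2) ord0 (enum_rank u).
  by rewrite !mxE.
exact: mx_entry_le_norm.
Qed.

Lemma exists_bellman_fixpoint : exists y : V -> R, forall v, y v = bellman G y v.
Proof.
have [x _ x_fix] := banach_fixed_point bellman_mx_contraction closedT (ex_intro _ 0 I).
by exists (fun_of_vec x) => v; rewrite {1}x_fix /= vec_of_funK.
Qed.

Lemma exists_tight_solution : exists (tau : V -> V) (x : V -> R),
  [/\ is_joint_strategy G tau, solves_H G x & forall v, ineq_tight G x v (tau v)].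
Proof.
have [y y_fix] := exists_bellman_fixpoint.
exists (best_succ G y), y; split=> [v|v v' e|v]; first by case: (best_succP G y v).
- rewrite /ineq_holds [y v]y_fix; have [_ /(_ v' e)] := best_succP G y v.
  by case: ifP.
- by rewrite /ineq_tight {1}y_fix.
Qed.

End BellmanFixpoint.

Section Offsets.
Context {R : realType} {V : finType} (G : DPG R V).

Lemma offset_ge0 (x : V -> R) v v' : ineq_holds G x v v' -> 0 <= offset G x v v'.
Proof. by rewrite /ineq_holds /offset; case: ifP => _; rewrite subr_ge0. Qed.

Lemma offset_tight (x : V -> R) v v' : ineq_tight G x v v' -> offset G x v v' = 0.
Proof. by rewrite /offset => <-; case: ifP => _; rewrite subrr. Qed.

Lemma f_sigma_ge0 sigma (x : V -> R) :
  is_joint_strategy G sigma -> solves_H G x -> 0 <= f_sigma G sigma x.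
Proof.
by move=> sigma_joint x_sol; apply: sumr_ge0 => v _; apply/offset_ge0/x_sol.
Qed.

Lemma f_sigma_tight {sigma} {x : V -> R} :
  (forall v, ineq_tight G x v (sigma v)) -> f_sigma G sigma x = 0.
Proof. by move=> x_tight; apply: big1 => v _; apply: offset_tight. Qed.

End Offsets.

Theorem theorem3p3 (R : realType) (V : finType) (G : DPG R V)
    (sigma : V -> V) (nu : V -> R) :
  is_joint_strategy G sigma ->
  optimal_for G sigma nu ->
  (co_optimal G sigma -> f_sigma G sigma nu = 0) /\
  ((forall v, ineq_tight G nu v (sigma v)) ->
     co_optimal G sigma /\ nu = val_game G).
Proof.
move=> sigma_joint [[_ nu_sol] nu_min]; split=> [sigma_opt | nu_tight].
- have [tau [x [tau_joint x_sol x_tight]]] := exists_tight_solution G.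
  have x_val := val_game_tight_solution G tau_joint x_sol x_tight.
  have x_sigma_tight v : ineq_tight G x v (sigma v).
    by rewrite /ineq_tight -x_val -!sigma_opt; exact: val_strat_unfold.
  apply/eqP; rewrite eq_le f_sigma_ge0 // andbT -(f_sigma_tight G x_sigma_tight).
  exact: nu_min.
- have nu_val := val_game_tight_solution G sigma_joint nu_sol nu_tight.
  by split=> // v; rewrite (val_strat_tight G sigma_joint nu_tight) nu_val.
Qed.
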